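(* Let $F$ be $\mathbb{C}$ or $\mathbb{R}$ and let $\mathfrak{L}$ be a solvable (left) Leibniz algebra over $F$ whose nilradical is the $r$-dimensional abelian algebra $A(r)$ with basis $n_1,\dots,n_r$. Choose elements $x_1,\dots,x_s\in\mathfrak{L}\setminus A(r)$ so that $\{n_1,\dots,n_r,x_1,\dots,x_s\}$ is a basis of $\mathfrak{L}$, and write the products as $$[x_\alpha,n_i]=\sum_{j=1}^r L^\alpha_{ij}n_j,\qquad [n_i,x_\alpha]=\sum_{j=1}^r R^\alpha_{ij}n_j,\qquad [x_\alpha,x_\beta]=\sum_{j=1}^r\sigma^{\alpha\beta}_j n_j,$$ with $L^\alpha,R^\alpha\in F^{r\times r}$ and $\sigma^{\alpha\beta}_j\in F$, for $1\le\alpha,\beta\le s$, $1\le i\le r$. Let $\sigma^{\alpha\beta}=(\sigma^{\alpha\beta}_1,\dots,\sigma^{\alpha\beta}_r)^T\in F^r$. Then for all $\alpha,\beta,\gamma\in\{1,\dots,s\}$, both $\sigma^{\alpha\alpha}$ and $\sigma^{\alpha\beta}+\sigma^{\beta\alpha}$ lie in the null space of $(R^\gamma)^T$, i.e. $(R^\gamma)^T\sigma^{\alpha\alpha}=0$ and $(R^\gamma)^T(\sigma^{\alpha\beta}+\sigma^{\beta\alpha})=0$.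
   Context: A (left) Leibniz algebra is a vector space with a bilinear product $[\cdot,\cdot]$ satisfying $[x,[y,z]]=[[x,y],z]+[y,[x,z]]$ for all $x,y,z$. It is solvable if its derived series $\mathfrak{L}^{(1)}=[\mathfrak{L},\mathfrak{L}]$, $\mathfrak{L}^{(n+1)}=[\mathfrak{L}^{(n)},\mathfrak{L}^{(n)}]$ eventually vanishes; nilpotent if the lower central series $\mathfrak{L}^2=[\mathfrak{L},\mathfrak{L}]$, $\mathfrak{L}^{n+1}=[\mathfrak{L},\mathfrak{L}^n]$ eventually vanishes. The nilradical is the unique maximal nilpotent ideal. $A(r)$ denotes the $r$-dimensional algebra with all products zero. *)

From HB Require Import structures.
From mathcomp Require Import all_boot all_order all_algebra.
From mathcomp Require Import complex.
From mathcomp Require Import reals.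
Set Implicit Arguments. Unset Strict Implicit. Unset Printing Implicit Defensive.
Import Order.TTheory GRing.Theory Num.Theory.
Local Open Scope ring_scope.

Section LeibnizDefs.
Variables (F : fieldType) (V : vectType F) (mul : V -> V -> V).

Definition bilinear_br : Prop :=
  (forall (a : F) (u v w : V), mul (a *: u + v) w = a *: mul u w + mul v w) /\
  (forall (a : F) (u v w : V), mul w (a *: u + v) = a *: mul w u + mul w v).

Definition left_leibniz : Prop :=
  forall x y z : V, mul x (mul y z) = mul (mul x y) z + mul y (mul x z).

Definition brv (U W : {vspace V}) : {vspace V} :=
  <<allpairs mul (vbasis U) (vbasis W)>>%VS.

Fixpoint derived (n : nat) : {vspace V} :=
  if n is m.+1 then brv (derived m) (derived m) else fullv.

Definition solvable_alg : Prop := exists n, derived n = 0%VS.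

Definition is_ideal (I : {vspace V}) : Prop :=
  (brv fullv I <= I)%VS /\ (brv I fullv <= I)%VS.

(* lower central series of the algebra I : I^1 = I, I^(n+1) = [I, I^n] *)
Fixpoint lcs (I : {vspace V}) (n : nat) : {vspace V} :=
  if n is m.+1 then (if m is _.+1 then brv I (lcs I m) else I) else I.

Definition nilpotent_sub (I : {vspace V}) : Prop := exists n, lcs I n = 0%VS.

Definition is_nilradical (N : {vspace V}) : Prop :=
  [/\ is_ideal N, nilpotent_sub N &
      forall I, is_ideal I -> nilpotent_sub I -> (I <= N)%VS].

Definition lemma3p1_stmt : Prop :=
  forall (r s : nat) (N : {vspace V})
    (n : 'I_r -> V) (x : 'I_s -> V)
    (Lm Rm : 'I_s -> 'M[F]_r) (sig : 'I_s -> 'I_s -> 'cV[F]_r),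
  bilinear_br -> left_leibniz -> solvable_alg ->
  is_nilradical N ->
  brv N N = 0%VS ->
  basis_of N [seq n i | i <- enum 'I_r] ->
  (forall a, x a \notin N) ->
  basis_of fullv ([seq n i | i <- enum 'I_r] ++ [seq x a | a <- enum 'I_s]) ->
  (forall a i, mul (x a) (n i) = \sum_(j < r) Lm a i j *: n j) ->
  (forall a i, mul (n i) (x a) = \sum_(j < r) Rm a i j *: n j) ->
  (forall a b, mul (x a) (x b) = \sum_(j < r) sig a b j 0 *: n j) ->
  forall a b g : 'I_s,
    (Rm g)^T *m sig a a = 0 /\ (Rm g)^T *m (sig a b + sig b a) = 0.

End LeibnizDefs.

From HB Require Import structures.
From mathcomp Require Import all_boot all_order all_algebra.
From mathcomp Require Import complex.
From mathcomp Require Import reals.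
Local Open Scope ring_scope.
Import GRing.Theory.
Set Implicit Arguments. Unset Strict Implicit.

(* In a left Leibniz algebra [[u,u],w] = 0 and [[u,v] + [v,u], w] = 0, since
   left multiplication by [u,v] is [L_u, L_v].  Applied to u = x_a, v = x_b and
   w = x_g, the vectors sig a a and sig a b + sig b a are coordinate vectors of
   elements of A(r) killed by right multiplication by x_g, whose matrix on the
   free family n is R^g; so (R^g)^T annihilates them. *)

Section LeftLinearBracket.
Variables (F : fieldType) (V : vectType F) (mul : V -> V -> V).
Hypothesis mul_linl :
  forall (a : F) (u v w : V), mul (a *: u + v) w = a *: mul u w + mul v w.

Lemma mul0l (w : V) : mul 0 w = 0.
Proof.
have h := mul_linl 1 0 0 w; rewrite !scale1r addr0 in h.
by apply: (addrI (mul 0 w)); rewrite addr0 -h.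
Qed.

Lemma mulDl (u v w : V) : mul (u + v) w = mul u w + mul v w.
Proof. by have := mul_linl 1 u v w; rewrite !scale1r. Qed.

Lemma mulZl (c : F) (u w : V) : mul (c *: u) w = c *: mul u w.
Proof. by rewrite -[c *: u]addr0 mul_linl mul0l addr0. Qed.

Lemma mul_suml (I : finType) (f : I -> V) (w : V) :
  mul (\sum_i f i) w = \sum_i mul (f i) w.
Proof. exact: (big_morph (fun u => mul u w) (fun u v => mulDl u v w) (mul0l w)). Qed.

Lemma trmx_mul_coord_eq0 (r : nat) (n : 'I_r -> V) (y : V)
    (Rm : 'M[F]_r) (c : 'cV[F]_r) :
  free [seq n i | i <- enum 'I_r] ->
  (forall i, mul (n i) y = \sum_j Rm i j *: n j) ->
  mul (\sum_j c j 0 *: n j) y = 0 -> Rm^T *m c = 0.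
Proof.
move=> free_n HR Hc; apply/colP => k; rewrite !mxE.
have /freeP free_X : free (map_tuple n (ord_tuple r)) by [].
have comb0 : \sum_(k < r) (\sum_j c j 0 * Rm j k) *:
    (map_tuple n (ord_tuple r))`_k = 0.
  rewrite -[RHS]Hc mul_suml; symmetry.
  under eq_bigr => j _ do rewrite mulZl HR scaler_sumr.
  rewrite exchange_big /=; apply: eq_bigr => i _.
  rewrite scaler_suml (nth_map i) ?size_enum_ord // nth_ord_enum.
  by apply: eq_bigr => j _; rewrite scalerA.
rewrite -[RHS](free_X _ comb0 k); apply: eq_bigr => j _.
by rewrite mxE mulrC.
Qed.

Hypothesis mul_leibniz : left_leibniz mul.

Lemma mul_sqr_annihilates (u w : V) : mul (mul u u) w = 0.
Proof.
apply: (addIr (mul u (mul u w))).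
by rewrite add0r -mul_leibniz.
Qed.

Lemma mul_symm_annihilates (u v w : V) : mul (mul u v + mul v u) w = 0.
Proof.
have e1 : mul (mul u v) w = mul u (mul v w) - mul v (mul u w).
  by rewrite mul_leibniz addrK.
have e2 : mul (mul v u) w = mul v (mul u w) - mul u (mul v w).
  by rewrite mul_leibniz addrK.
by rewrite mulDl e1 e2 addrA subrK subrr.
Qed.

End LeftLinearBracket.

Lemma lemma3p1_field (F : fieldType) (V : vectType F) (mul : V -> V -> V) :
  lemma3p1_stmt mul.
Proof.
move=> r s N n x Lm Rm sig [mul_linl _] mul_leibniz _ _ _ basis_n _ _ _ HR Hs a b g.
have kernel_Rg := trmx_mul_coord_eq0 mul_linl (basis_free basis_n) (HR g).
split; apply: kernel_Rg.
  by rewrite -Hs (mul_sqr_annihilates mul_leibniz).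
have -> : \sum_j (sig a b + sig b a) j 0 *: n j = mul (x a) (x b) + mul (x b) (x a).
  by rewrite !Hs -big_split; apply: eq_bigr => j _; rewrite mxE scalerDl.
exact: (mul_symm_annihilates mul_linl mul_leibniz).
Qed.

Theorem lemma3p1 (R : realType) :
  (forall V : vectType R, forall mul : V -> V -> V, lemma3p1_stmt mul) /\
  (forall V : vectType R[i], forall mul : V -> V -> V, lemma3p1_stmt mul).
Proof. by split=> V mul; apply: lemma3p1_field. Qed.
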